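(* Let $\Omega\subseteq\mathbb{R}^2$ be a bounded, simply connected domain of class $C^1$, let $a_1,\ldots,a_p$ be distinct points in $\Omega$, and let $\{L_1,\ldots,L_q\}$ be a minimal connection for $\{a_1,\ldots,a_p\}$ relative to $\Omega$. If some $L_j$ has an endpoint $b_j\in\partial\Omega$, then $L_j$ is orthogonal to $\partial\Omega$ at $b_j$.
   Context: A connection for $\{a_1,\ldots,a_p\}$ relative to $\Omega$ is a finite collection $\{L_1,\ldots,L_q\}$ of closed non-degenerate straight line segments such that (i) each $L_j\subseteq\overline\Omega$; (ii) each $L_j$ either connects two of $a_1,\ldots,a_p$ or connects some $a_i$ with a point of $\partial\Omega$; (iii) each $a_i$ is an endpoint of an odd number of the $L_j$. A minimal connection relative to $\Omega$ is one minimising $\sum_j\mathcal{H}^1(L_j)$ among all connections relative to $\Omega$. *)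

From HB Require Import structures.
From mathcomp Require Import all_boot all_order all_algebra.
From mathcomp Require Import all_classical all_reals all_analysis.
Set Implicit Arguments. Unset Strict Implicit. Unset Printing Implicit Defensive.
Import Order.TTheory GRing.Theory Num.Theory numFieldNormedType.Exports.
Local Open Scope classical_set_scope.
Local Open Scope ring_scope.

Section Plane.
Variable R : realType.
Notation P := (R * R)%type.

Definition dot (u v : P) : R := u.1 * v.1 + u.2 * v.2.
Definition vsub (u v : P) : P := (u.1 - v.1, u.2 - v.2).
(* Euclidean length |u - v| = H^1 of the segment [u, v] *)
Definition edist (u v : P) : R := Num.sqrt (dot (vsub u v) (vsub u v)).
Definition segpt (u v : P) (t : R) : P :=
  ((1 - t) * u.1 + t * v.1, (1 - t) * u.2 + t * v.2).

Definition bdry (O : set P) : set P := closure O `\` interior O.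

Definition bounded_set (O : set P) : Prop :=
  exists M : R, forall x, O x -> `|x.1| <= M /\ `|x.2| <= M.

Definition simply_connected (O : set P) : Prop :=
  forall gam : R -> P,
    {within `[0, 1], continuous gam} ->
    (forall t, 0 <= t <= 1 -> O (gam t)) ->
    gam 0 = gam 1 ->
    exists H : P -> P,
      {within `[0, 1] `*` `[0, 1], continuous H} /\
      (forall s t, 0 <= s <= 1 -> 0 <= t <= 1 -> O (H (s, t))) /\
      (forall t, 0 <= t <= 1 -> H (0, t) = gam t) /\
      (forall t, 0 <= t <= 1 -> H (1, t) = H (1, 0)) /\
      (forall s, 0 <= s <= 1 -> H (s, 0) = H (s, 1)).

Definition C1fun (g : R -> R) : Prop :=
  (forall x, derivable g x 1) /\ continuous (derive1 g).

(* A C^1 chart of the boundary at b: in the orthonormal frame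
   tau = (c, s), nu = (-s, c) centered at b, inside the box
   |x| < r, |y| < h, the domain O is exactly the subgraph {y < g x}. *)
Definition C1_chart (O : set P) (b : P) (c s r h : R) (g : R -> R) : Prop :=
  c ^+ 2 + s ^+ 2 = 1 /\ 0 < r /\ 0 < h /\ C1fun g /\ g 0 = 0 /\
  (forall x, `|x| < r -> `|g x| < h) /\
  (forall q : P,
     let x := dot (vsub q b) (c, s) in
     let y := dot (vsub q b) (- s, c) in
     `|x| < r -> `|y| < h -> (O q <-> y < g x)).

Definition C1_domain (O : set P) : Prop :=
  open O /\ connected O /\ O !=set0 /\ bounded_set O /\
  forall b, bdry O b -> exists c s r h g, C1_chart O b c s r h g.

(* tangent vector of the boundary at b, read in a chart *)
Definition chart_tangent (c s : R) (g : R -> R) : P :=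
  (c + derive1 g 0 * (- s), s + derive1 g 0 * c).

Definition orthogonal_to_bdry (O : set P) (b d : P) : Prop :=
  forall c s r h g, C1_chart O b c s r h g -> dot d (chart_tangent c s g) = 0.

(* A segment is represented by its pair of endpoints (u, v). *)
Definition same_segment (L1 L2 : P * P) : Prop :=
  L1 = L2 \/ L1 = (L2.2, L2.1).

Definition is_connection (O : set P) (a : seq P) (L : seq (P * P)) : Prop :=
  (* distinct segments (a collection, i.e. a set, of segments) *)
  (forall i j, (i < size L)%N -> (j < size L)%N -> i <> j ->
     ~ same_segment (nth (0, 0) L i) (nth (0, 0) L j)) /\
  (forall l, l \in L -> l.1 <> l.2) /\
  (forall l, l \in L -> forall t, 0 <= t <= 1 -> closure O (segpt l.1 l.2 t)) /\
  (forall l, l \in L ->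
     (l.1 \in a /\ l.2 \in a) \/
     (l.1 \in a /\ bdry O l.2) \/
     (l.2 \in a /\ bdry O l.1)) /\
  (forall ai, ai \in a -> odd (count (fun l => (l.1 == ai) || (l.2 == ai)) L)).

Definition total_length (L : seq (P * P)) : R :=
  \sum_(l <- L) edist l.1 l.2.

Definition minimal_connection (O : set P) (a : seq P) (L : seq (P * P)) : Prop :=
  is_connection O a L /\
  forall L', is_connection O a L' -> total_length L <= total_length L'.

End Plane.

From Pilot Require Import Defs.
From HB Require Import structures.
From mathcomp Require Import all_boot all_order all_algebra.
From mathcomp Require Import all_classical all_reals all_analysis.
From mathcomp Require Import ring lra.
(* Re-import so that [edist] is Defs.edist, not mathcomp-analysis' extended distance. *)
Import Defs.
Import Order.TTheory GRing.Theory Num.Theory numFieldNormedType.Exports.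

(* If the segment [x, y] of a minimal connection joins some a_i = x to a boundary
   point y, then y is a nearest boundary point to x: were a boundary point q
   closer, the segment from x towards q would leave the domain at a first point c,
   still closer than y, and replacing [x, y] by [x, c] (or deleting both when
   [x, c] is already a segment of the connection) would give a shorter connection.
   So in a C^1 chart t |-> y + t tau + g(t) nu of the boundary, the squared
   distance to x is minimal at t = 0, and its vanishing derivative there is the
   orthogonality of x - y to the tangent tau + g'(0) nu. *)

Set Implicit Arguments. Unset Strict Implicit. Unset Printing Implicit Defensive.
Local Open Scope classical_set_scope.
Local Open Scope ring_scope.

Section Plane.
Variable R : realType.
Notation P := (R * R)%type.
Implicit Types (O : set P) (u v b q : P).

Lemma continuous_line (p d : P) :
  continuous (fun t : R => (p.1 + t * d.1, p.2 + t * d.2)).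
Proof.
move=> t; apply: (@cvg_pair _ _ _ _ (nbhs _) (nbhs _));
  by apply: cvgD; [exact: cvg_cst | apply: cvgM; [exact: cvg_id | exact: cvg_cst]].
Qed.

Lemma closure_of_cvg (T : Type) (F : set_system T) (FF : ProperFilter F)
    (f : T -> P) O q :
  f @ F --> q -> (\forall t \near F, O (f t)) -> closure O q.
Proof.
move=> fq nearO; apply: (closed_cvg _ (@closed_closure _ O)) fq.
by apply: filterS nearO => t; apply: subset_closure.
Qed.

Lemma bdry_notin O q : open O -> bdry O q -> ~ O q.
Proof. by rewrite openE => oO [_ nint] /oO. Qed.

Lemma closure_notin_bdry O q : closure O q -> ~ O q -> bdry O q.
Proof. by move=> clq nOq; split => // /interior_subset. Qed.

Definition sqdist u v : R := dot (vsub u v) (vsub u v).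

Lemma sqdist_ge0 u v : 0 <= sqdist u v.
Proof. by rewrite /sqdist /dot addr_ge0 // -expr2 sqr_ge0. Qed.

Lemma ler_edist u v q : (edist u v <= edist u q) = (sqdist u v <= sqdist u q).
Proof. exact/ler_sqrt/sqdist_ge0. Qed.

Lemma edist_ge0 u v : 0 <= edist u v.
Proof. exact: sqrtr_ge0. Qed.

Lemma edistC u v : edist u v = edist v u.
Proof. by rewrite /edist /dot /vsub /=; congr Num.sqrt; ring. Qed.

Lemma segpt0 u v : segpt u v 0 = u.
Proof. by rewrite /segpt subr0 !mul1r !mul0r !addr0 -surjective_pairing. Qed.

Lemma segpt1 u v : segpt u v 1 = v.
Proof. by rewrite /segpt subrr !mul0r !mul1r !add0r -surjective_pairing. Qed.

Lemma segpt_segpt u v t w : segpt u (segpt u v t) w = segpt u v (w * t).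
Proof. by rewrite /segpt /=; congr pair; ring. Qed.

Lemma edist_segpt u v t : 0 <= t -> edist u (segpt u v t) = t * edist u v.
Proof.
move=> t0; rewrite /edist -[in RHS](ger0_norm t0) -sqrtr_sqr -sqrtrM ?sqr_ge0 //.
by congr Num.sqrt; rewrite /dot /vsub /segpt /=; ring.
Qed.

Lemma continuous_segpt u v : continuous (segpt u v).
Proof.
have -> : segpt u v = fun t => (u.1 + t * (v.1 - u.1), u.2 + t * (v.2 - u.2)).
  by apply: funext => t; rewrite /segpt; congr pair; ring.
exact: (@continuous_line u (v.1 - u.1, v.2 - u.2)).
Qed.

(* The point with coordinates (x, y) in the frame of [C1_chart]. *)
Definition chart_pt b (c s x y : R) : P :=
  (b.1 + x * c + y * - s, b.2 + x * s + y * c).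

Lemma chart_pt_graph0 b c s (g : R -> R) : g 0 = 0 -> chart_pt b c s 0 (g 0) = b.
Proof. by move=> ->; rewrite /chart_pt !mul0r !addr0 -surjective_pairing. Qed.

Lemma chart_ptP O b c s r h g x y : C1_chart O b c s r h g ->
  `|x| < r -> `|y| < h -> (O (chart_pt b c s x y) <-> y < g x).
Proof.
move=> [cs [_ [_ [_ [_ [_ chartO]]]]]] xr yh.
have /= := chartO (chart_pt b c s x y).
have -> : dot (vsub (chart_pt b c s x y) b) (c, s) = x.
  by rewrite /dot /vsub /chart_pt /= -[RHS]mulr1 -cs; ring.
have -> : dot (vsub (chart_pt b c s x y) b) (- s, c) = y.
  by rewrite /dot /vsub /chart_pt /= -[RHS]mulr1 -cs; ring.
exact.
Qed.

Lemma chart_graph_bdry O b c s r h g x : C1_chart O b c s r h g ->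
  `|x| < r -> bdry O (chart_pt b c s x (g x)).
Proof.
move=> ch xr; have [_ [_ [_ [_ [_ [gh _]]]]]] := ch.
have /andP[hg gh'] : - h < g x < h by rewrite -ltr_norml gh.
apply: closure_notin_bdry; last by move/(chart_ptP ch xr (gh x xr)); rewrite ltxx.
apply: (closure_of_cvg (F := (g x)^'-)).
  by apply: cvg_at_left_filter; exact: (@continuous_line (_, _) (- s, c)).
near=> y; have y_lt : y < g x by near: y; exact: nbhs_left_lt.
apply/(chart_ptP ch xr) => //; rewrite ltr_norml (lt_trans y_lt gh') andbT.
by near: y; exact: nbhs_left_gt.
Unshelve. all: by end_near.
Qed.

(* c is segpt u v t0, with t0 the infimum of the times t at which the segment is
   outside O. *)
Lemma segment_first_exit O u v : open O -> O u -> ~ O v ->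
  exists2 c, bdry O c &
    (forall t, 0 <= t <= 1 -> closure O (segpt u c t)) /\ edist u c <= edist u v.
Proof.
move=> oO Ou nOv.
pose T := [set t : R | 0 <= t /\ ~ O (segpt u v t)].
have T1 : T 1 by split; rewrite ?segpt1.
have Tlb : has_lbound T by exists 0 => t [].
pose t0 := inf T.
have t0_ge0 : 0 <= t0 by apply: lb_le_inf => [|t []]; first exists 1.
have t0_le1 : t0 <= 1 by apply: ge_inf.
have O_before t : 0 <= t < t0 -> O (segpt u v t).
  move=> /andP[t_ge0 t_lt]; apply/not_notP => nO.
  by have := ge_inf Tlb (conj t_ge0 nO); lra.
have nO_t0 : ~ O (segpt u v t0).
  move=> Ot0; have : nbhs (segpt u v t0) O by rewrite openE in oO; exact: oO.
  move=> /(@continuous_segpt u v t0) /nbhs_ballP[e e_gt0 ballO].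
  have [t [t_ge0 nOt] t_lt] : exists2 t, T t & t < t0 + e.
    by apply: inf_lt; [exists 1 | rewrite ltrDl].
  have t0_le : t0 <= t by apply: ge_inf.
  by apply: nOt; apply: ballO; rewrite /ball /= ltr_norml; apply/andP; split; lra.
have t0_gt0 : 0 < t0.
  by rewrite lt_neqAle t0_ge0 andbT; apply/eqP => t00; rewrite -t00 segpt0 in nO_t0.
have cl_t0 : closure O (segpt u v t0).
  apply: (closure_of_cvg (F := t0^'-)).
    by apply: cvg_at_left_filter; exact: continuous_segpt.
  near=> t; apply: O_before; apply/andP; split.
    by near: t; exact: nbhs_left_ge.
  by near: t; exact: nbhs_left_lt.
exists (segpt u v t0); first exact: closure_notin_bdry.
split; last by rewrite edist_segpt //; have := edist_ge0 u v; nra.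
move=> w /andP[w_ge0]; rewrite segpt_segpt le_eqVlt => /orP[/eqP ->|w_lt1].
  by rewrite mul1r.
by apply/subset_closure/O_before; apply/andP; split; nra.
Unshelve. all: by end_near.
Qed.

Lemma chart_tangent_orthogonal_of_min x b c s r (g : R -> R) :
  C1fun g -> g 0 = 0 -> 0 < r ->
  (forall t, - r < t < r -> sqdist x b <= sqdist x (chart_pt b c s t (g t))) ->
  dot (vsub x b) (chart_tangent c s g) = 0.
Proof.
move=> [g_der _] g0 r_gt0 b_min.
pose d1 : R -> R := cst (b.1 - x.1) + c *: id - s *: g.
pose d2 : R -> R := cst (b.2 - x.2) + s *: id + c *: g.
have sqdistE t : sqdist x (chart_pt b c s t (g t)) = (d1 * d1 + d2 * d2) t.
  by rewrite /sqdist /chart_pt /dot /vsub /d1 /d2 !fctE /GRing.scale /=; ring.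
have dg (t : R) : is_derive t (1 : R) g ('D_1 g t) by apply: derivableP.
have dd1 (t : R) : is_derive t (1 : R) d1 (c - s * 'D_1 g t).
  apply: (is_derive_eq (is_deriveB (is_deriveD (is_derive_cst _ _ _)
    (is_deriveZ c (is_derive_id _ _))) (is_deriveZ s (dg t)))).
  by rewrite /GRing.scale /=; ring.
have dd2 (t : R) : is_derive t (1 : R) d2 (s + c * 'D_1 g t).
  apply: (is_derive_eq (is_deriveD (is_deriveD (is_derive_cst _ _ _)
    (is_deriveZ s (is_derive_id _ _))) (is_deriveZ c (dg t)))).
  by rewrite /GRing.scale /=; ring.
have d_min : is_derive (0 : R) (1 : R) (d1 * d1 + d2 * d2) 0.
  apply: (@derive1_at_min _ _ (- r) r); first lra.
  - by move=> t _; apply: derivableD; apply: derivableM; apply: ex_derive.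
  - by rewrite in_itv /=; apply/andP; split; lra.
  move=> t; rewrite in_itv /= => t_in; rewrite -!sqdistE.
  by rewrite chart_pt_graph0 //; exact: b_min.
have dF := is_deriveD (is_deriveM (dd1 0) (dd1 0)) (is_deriveM (dd2 0) (dd2 0)).
have := @derive_val _ _ _ _ _ _ _ dF.
rewrite (@derive_val _ _ _ _ _ _ _ d_min) /chart_tangent /dot /vsub /d1 /d2.
by rewrite !fctE /GRing.scale /= derive1E g0 => ?; lra.
Qed.

Lemma orthogonal_to_bdry_of_nearest O x b :
  (forall q, bdry O q -> edist x b <= edist x q) -> orthogonal_to_bdry O b (vsub x b).
Proof.
move=> b_nearest c s r h g ch; have [_ [r_gt0 [_ [g_C1 [g0 _]]]]] := ch.
apply: (chart_tangent_orthogonal_of_min g_C1 g0 r_gt0) => t t_in.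
by rewrite -ler_edist; apply/b_nearest/(chart_graph_bdry ch); rewrite ltr_norml.
Qed.

Section Connections.
Variables (O : set P) (a : seq P).
Implicit Types (l n : P * P) (L : seq (P * P)).

Definition touches (z : P) (l : P * P) : bool := (l.1 == z) || (l.2 == z).

Definition same_segmentb (l1 l2 : P * P) : bool := (l1 == l2) || (l1 == (l2.2, l2.1)).

Lemma same_segmentP l1 l2 : reflect (same_segment l1 l2) (same_segmentb l1 l2).
Proof. by apply: (iffP orP) => -[/eqP|/eqP] ->; [left|right|left|right]. Qed.

Lemma same_segmentbC l1 l2 : same_segmentb l1 l2 = same_segmentb l2 l1.
Proof.
case: l1 l2 => [u1 u2] [v1 v2]; rewrite /same_segmentb /= !xpair_eqE.
by apply/idP/idP => /orP[] /andP[/eqP -> /eqP ->]; rewrite !eqxx ?orbT.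
Qed.

Lemma same_segment_edist l1 l2 : same_segment l1 l2 -> edist l1.1 l1.2 = edist l2.1 l2.2.
Proof. by case=> ->; rewrite // edistC. Qed.

Lemma same_segment_touches z l1 l2 : same_segment l1 l2 -> touches z l1 = touches z l2.
Proof. by case=> ->; rewrite // /touches orbC. Qed.

Definition admissible_segment (l : P * P) : Prop :=
  [/\ l.1 <> l.2, forall t, 0 <= t <= 1 -> closure O (segpt l.1 l.2 t) &
      (l.1 \in a /\ l.2 \in a) \/ (l.1 \in a /\ bdry O l.2) \/ (l.2 \in a /\ bdry O l.1)].

Lemma distinct_segmentsP L :
  (forall i j, (i < size L)%N -> (j < size L)%N -> i <> j ->
     ~ same_segment (nth (0, 0) L i) (nth (0, 0) L j)) <->
  pairwise (fun l1 l2 => ~~ same_segmentb l1 l2) L.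
Proof.
split=> [distinct|/(pairwiseP (0, 0)) distinct i j iL jL ij /same_segmentP].
  apply/(pairwiseP (0, 0)) => i j iL jL ij; apply/negP => /same_segmentP.
  by apply: distinct => // eij; rewrite eij ltnn in ij.
case: (ltngtP i j) => [/(distinct i j iL jL)|/(distinct j i jL iL)|//].
  by move=> /negbTE ->.
by rewrite same_segmentbC => /negbTE ->.
Qed.

Lemma is_connectionP L : is_connection O a L <->
  [/\ pairwise (fun l1 l2 => ~~ same_segmentb l1 l2) L,
      {in L, forall l, admissible_segment l} &
      {in a, forall z, odd (count (touches z) L)}].
Proof.
split=> [[/distinct_segmentsP dist [nondeg [cl [ends odd_a]]]]|].
  by split=> // l lL; split; [exact: nondeg|exact: cl|exact: ends].
move=> [/distinct_segmentsP dist adm odd_a].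
split=> //; split=> [l /adm[]//|]; split=> [l /adm[]//|]; split=> [l /adm[]//|].
exact: odd_a.
Qed.

Lemma total_length_rem L l : l \in L ->
  total_length L = edist l.1 l.2 + total_length (rem l L).
Proof. by move=> lL; rewrite /total_length (perm_big _ (perm_to_rem lL)) big_cons. Qed.

Lemma is_connection_rem_pair L l l' : is_connection O a L -> l \in L -> l' \in rem l L ->
  {in a, forall z, touches z l = touches z l'} -> is_connection O a (rem l' (rem l L)).
Proof.
move=> /is_connectionP[distinct adm odd_a] lL l'L touch_eq; apply/is_connectionP; split.
- apply: subseq_pairwise distinct.
  exact: subseq_trans (rem_subseq _ _) (rem_subseq _ _).
- by move=> m /mem_rem /mem_rem /adm.
move=> z za; have := odd_a z za.
rewrite (permP (perm_to_rem lL)) /= (permP (perm_to_rem l'L)) /= touch_eq //.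
by case: (touches z l') => //=; rewrite negbK.
Qed.

Lemma is_connection_replace L l n : is_connection O a L -> l \in L ->
  admissible_segment n -> ~~ has (same_segmentb n) (rem l L) ->
  {in a, forall z, touches z n = touches z l} -> is_connection O a (n :: rem l L).
Proof.
move=> /is_connectionP[distinct adm odd_a] lL adm_n fresh touch_eq.
apply/is_connectionP; split.
- rewrite pairwise_cons (subseq_pairwise (rem_subseq _ _) distinct) andbT.
  by apply/allP => m; move/hasPn: fresh; apply.
- by move=> m; rewrite inE => /predU1P[->|/mem_rem/adm].
by move=> z za; have := odd_a z za; rewrite (permP (perm_to_rem lL)) /= touch_eq.
Qed.

Hypotheses (O_open : open O) (a_in_O : {in a, forall z, O z}).

Lemma bdry_notin_a z : bdry O z -> z \notin a.
Proof. by move=> zb; apply/negP => /a_in_O; exact: bdry_notin zb. Qed.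

Lemma connection_bdry_end L u v : is_connection O a L -> (u, v) \in L ->
  (bdry O v -> u \in a) /\ (bdry O u -> v \in a).
Proof.
move=> /is_connectionP[_ adm _] /adm[_ _ /= ends].
by split=> /bdry_notin_a /negP nin; case: ends => [[]|[[]|[]]].
Qed.

Lemma touches_bdry_end z x y : z \in a -> bdry O y -> touches z (x, y) = (x == z).
Proof.
move=> za /bdry_notin_a yna; rewrite /touches /= orbC; case: eqP => // yz.
by rewrite yz za in yna.
Qed.

Lemma minimal_connection_nearest_bdry L x y q : minimal_connection O a L ->
  (x, y) \in L \/ (y, x) \in L -> x \in a -> bdry O y -> bdry O q ->
  edist x y <= edist x q.
Proof.
move=> [conn L_min] xyL xa yb qb.
have [c cb [c_cl c_near]] :=
  segment_first_exit O_open (a_in_O xa) (bdry_notin O_open qb).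
apply: le_trans c_near.
have [l lL [l_len l_touch]] : exists2 l, l \in L &
    edist l.1 l.2 = edist x y /\ {in a, forall z, touches z l = (x == z)}.
  case: xyL => lL; [exists (x, y) | exists (y, x)] => //; split=> [|z za].
  - by [].
  - exact: touches_bdry_end.
  - exact: edistC.
  - by rewrite /touches orbC; exact: touches_bdry_end.
have n_touch z : z \in a -> touches z (x, c) = (x == z).
  by move=> za; exact: touches_bdry_end.
have L_len := total_length_rem lL.
have [/hasP[l' l'L /same_segmentP xc_l']|fresh] :=
  boolP (has (same_segmentb (x, c)) (rem l L)).
  have touch_eq z : z \in a -> touches z l = touches z l'.
    by move=> za; rewrite l_touch // -(same_segment_touches _ xc_l') n_touch.
  have := L_min _ (is_connection_rem_pair conn lL l'L touch_eq).
  rewrite L_len (total_length_rem l'L) -(same_segment_edist xc_l') l_len.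
  by have := edist_ge0 (x, c).1 (x, c).2; lra.
have adm_xc : admissible_segment (x, c).
  split; [|exact: c_cl|by right; left].
  by move=> /= xc; apply: (bdry_notin O_open cb); rewrite -xc; exact: a_in_O.
have touch_eq z : z \in a -> touches z (x, c) = touches z l.
  by move=> za; rewrite n_touch ?l_touch.
have := L_min _ (is_connection_replace conn lL adm_xc fresh touch_eq).
by rewrite L_len /total_length big_cons -/(total_length _) l_len; lra.
Qed.

End Connections.

End Plane.

Theorem lemma1p5 (R : realType) (O : set (R * R)) (a : seq (R * R))
  (L : seq ((R * R) * (R * R))) :
  C1_domain O -> simply_connected O ->
  uniq a -> (forall ai, ai \in a -> O ai) ->
  minimal_connection O a L ->
  forall l, l \in L ->
    (bdry O l.2 -> orthogonal_to_bdry O l.2 (vsub l.1 l.2)) /\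
    (bdry O l.1 -> orthogonal_to_bdry O l.1 (vsub l.2 l.1)).
Proof.
move=> [openO _] _ _ a_in_O L_min [u v] uvL.
have [v_end u_end] := connection_bdry_end openO a_in_O L_min.1 uvL.
split=> /= bd; apply: orthogonal_to_bdry_of_nearest => q.
- by apply: (minimal_connection_nearest_bdry openO a_in_O L_min (or_introl uvL) (v_end bd)).
- by apply: (minimal_connection_nearest_bdry openO a_in_O L_min (or_intror uvL) (u_end bd)).
Qed.
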